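(* Let $0<\mu<L$ and $q:=\mu/L\in(0,1)$. For $\alpha,\beta,\gamma\in\mathbb{R}$ and $\lambda\in[\mu,L]$, let $$T_\lambda(\alpha,\beta,\gamma):=\begin{pmatrix}(1+\beta)(1-\alpha\lambda)-\gamma\alpha\lambda & -\beta(1-\alpha\lambda)\\ 1 & 0\end{pmatrix}\in\mathbb{R}^{2\times 2},$$ and define $\rho(\alpha,\beta,\gamma):=\max_{\mu\le\lambda\le L}\rho\big(T_\lambda(\alpha,\beta,\gamma)\big)$, where $\rho(\cdot)$ of a matrix denotes its spectral radius. Set $$\gamma^\star:=\frac{2+q-\sqrt{q^2+8q}}{2},\qquad \beta^\star:=\frac{(\gamma^\star)^2}{1-q}=\frac{\big(2+q-\sqrt{q^2+8q}\big)^2}{4(1-q)}.$$ Then $(\beta^\star,\gamma^\star)$ minimizes $(\beta,\gamma)\mapsto\rho(1/L,\beta,\gamma)$ over $\mathbb{R}^2$, with minimum value $$\rho(1/L,\beta^\star,\gamma^\star)=1-\sqrt{q(1+\gamma^\star)}=\gamma^\star .$$ Moreover, $$\frac{2+q-\sqrt{q^2+8q}}{2}\;\le\;1-\frac{2\sqrt{q}}{\sqrt{3+q}}\;\le\;1-\sqrt{q}.$$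
   Context: This concerns the iteration $y_{k+1}=x_k-\alpha\nabla f(x_k)$, $x_{k+1}=y_{k+1}+\beta(y_{k+1}-y_k)+\gamma(y_{k+1}-x_k)$ applied to a strongly convex quadratic $f(x)=\tfrac12 x^\top Qx-p^\top x$ with $Q$ symmetric positive definite with eigenvalues in $[\mu,L]$; writing $\xi_k=(x_k^\top,x_{k-1}^\top)^\top$, the error evolves as $\xi_{k+1}-\xi_*=T(\alpha,\beta,\gamma)(\xi_k-\xi_* )$, and for each eigenvalue $\lambda$ of $Q$ the corresponding $2\times2$ block is $T_\lambda(\alpha,\beta,\gamma)$ above. The method with $\alpha=1/L$, $\beta=\beta^\star$, $\gamma=\gamma^\star$ is called OGM-$q$; the quantities $1-\sqrt q$ and $1-2\sqrt q/\sqrt{3+q}$ are the corresponding worst-case spectral radii of two Nesterov-type variants with $\gamma=0$. *)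

From HB Require Import structures.
From mathcomp Require Import all_boot all_order all_algebra.
From mathcomp Require Import all_classical all_reals.
From mathcomp.real_closed Require Import complex.

Set Implicit Arguments.
Unset Strict Implicit.
Unset Printing Implicit Defensive.

Import Order.TTheory GRing.Theory Num.Theory.
Local Open Scope ring_scope.
Local Open Scope classical_set_scope.

Section Defs.
Variable R : realType.

Definition Tmat (a b g l : R) : 'M[R]_2 :=
  \matrix_(i < 2, j < 2)
    if (val i == 0%N) then
      (if (val j == 0%N) then (1 + b) * (1 - a * l) - g * a * l
       else - b * (1 - a * l))
    else (if (val j == 0%N) then 1 else 0).

Definition specrad (A : 'M[R]_2) : R :=
  sup [set Normc.normc z | z in
        [set z : R[i] | eigenvalue (map_mx (fun x : R => x%:C%C) A) z]].

Definition rho_worst (mu L a b g : R) : R :=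
  sup [set specrad (Tmat a b g l) | l in `[mu, L]%classic].

End Defs.

From HB Require Import structures.
From mathcomp Require Import all_boot all_order all_algebra.
From mathcomp Require Import all_classical all_reals.
From mathcomp.real_closed Require Import complex.
From mathcomp Require Import ring lra.
Import Order.TTheory GRing.Theory Num.Theory.
Local Open Scope ring_scope.
Local Open Scope complex_scope.
Local Open Scope classical_set_scope.

Set Implicit Arguments.
Unset Strict Implicit.
Unset Printing Implicit Defensive.

(* The eigenvalues of T_lambda are the roots of p(z) = z^2 - t z + d, where t and d
   are affine in u = alpha lambda.  For alpha = 1/L and lambda = L they are 0 and
   -gamma, so rho(1/L, beta, gamma) >= |gamma|.  Since gamma_star solves
   gamma^2 - (2 + q) gamma + 1 - q = 0, Jury's criterion puts all roots for
   (beta_star, gamma_star) in the closed disc of radius gamma_star, uniformly in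
   u in [q, 1].  Conversely, if rho(1/L, beta, gamma) < gamma_star, the roots at
   lambda = mu lie in the open disc, forcing d < gamma_star^2 and p(gamma_star) > 0,
   whereas the same quadratic relation gives p(gamma_star) <= 0 as soon as
   gamma <= gamma_star and d <= gamma_star^2. *)

Lemma det_mx22 (F : comPzRingType) (A : 'M[F]_2) :
  \det A = A 0 0 * A 1 1 - A 0 1 * A 1 0.
Proof.
rewrite (expand_det_row _ 0) !big_ord_recl big_ord0 addr0 /cofactor !det_mx11.
rewrite /= !mxE /= expr0 expr1 !mul1r mulN1r mulrN.
by congr (A _ _ * A _ _ - A _ _ * A _ _); apply: val_inj.
Qed.

Lemma eigenvalue_mx22 (F : fieldType) (A : 'M[F]_2) z :
  eigenvalue A z = (z ^+ 2 - \tr A * z + \det A == 0).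
Proof.
have s := size_char_poly A.
rewrite eigenvalue_root_char /root horner_coef s !big_ord_recl big_ord0 /=.
rewrite char_poly_det (char_poly_trace A) //.
have -> : (char_poly A)`_2 = 1 by move/monicP: (char_poly_monic A); rewrite /lead_coef s.
by rewrite expr0 expr1 mulr1 sqrrN expr1n mul1r; congr (_ == 0); rewrite /=; ring.
Qed.

Section QuadraticRoots.
Variable R : rcfType.
Implicit Types (t d r x y : R) (z : R[i]).

Definition quad_root t d z := z ^+ 2 - t%:C * z + d%:C = 0.

Lemma quad_rootE t d x y : quad_root t d (x +i* y) <->
  x ^+ 2 - y ^+ 2 - t * x + d = 0 /\ (2 * x - t) * y = 0.
Proof.
rewrite /quad_root.
have -> : (x +i* y) ^+ 2 - t%:C * (x +i* y) + d%:C =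
    (x ^+ 2 - y ^+ 2 - t * x + d) +i* ((2 * x - t) * y).
  by apply/eqP; rewrite eq_complex /=; apply/andP; split; apply/eqP; ring.
by split=> [[-> ->] | [-> ->]].
Qed.

Lemma quad_root_nonreal t d x y : quad_root t d (x +i* y) -> y != 0 ->
  t = 2 * x /\ d = x ^+ 2 + y ^+ 2.
Proof.
move=> /quad_rootE[h1 h2] yn0.
move/eqP: h2; rewrite mulf_eq0 subr_eq0 (negPf yn0) orbF => /eqP ht.
rewrite -ht in h1 *; split=> //.
by apply/eqP; rewrite -subr_eq0 -h1; apply/eqP; ring.
Qed.

Lemma normc_le_sqr x y r : 0 <= r ->
  (Normc.normc (x +i* y) <= r) = (x ^+ 2 + y ^+ 2 <= r ^+ 2).
Proof. by move=> r0; rewrite /= -{1}(ger0_norm r0) -sqrtr_sqr ler_sqrt ?sqr_ge0. Qed.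

Lemma normc_lt_sqr x y r : 0 < r ->
  (Normc.normc (x +i* y) < r) = (x ^+ 2 + y ^+ 2 < r ^+ 2).
Proof.
by move=> r0; rewrite /= -{1}(gtr0_norm r0) -sqrtr_sqr ltr_sqrt ?exprn_gt0.
Qed.

(* Jury's criterion; it fails for r = 0, where z^2 - t z has the root t. *)
Lemma quad_root_normc_le t d r z : 0 < r -> d <= r ^+ 2 ->
  0 <= r ^+ 2 - t * r + d -> 0 <= r ^+ 2 + t * r + d ->
  quad_root t d z -> Normc.normc z <= r.
Proof.
move=> r0 hd hp hm; case: z => x y hz; rewrite normc_le_sqr ?(ltW r0) //.
have [y0|yn0] := eqVneq y 0; last by have [_ <-] := quad_root_nonreal hz yn0.
move: hz; rewrite y0 => /quad_rootE[+ _]; rewrite expr0n /= subr0 addr0 => hx.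
have hd' : d = x * (t - x) by apply/eqP; rewrite -subr_eq0 -hx; apply/eqP; ring.
have ep : r ^+ 2 - t * r + d = (r - x) * (r - (t - x)) by rewrite hd'; ring.
have em : r ^+ 2 + t * r + d = (r + x) * (r + (t - x)) by rewrite hd'; ring.
have [hxr|hxr] := lerP x r; last first.
  have : r <= t - x by rewrite -subr_ge0; nra.
  nra.
have [hrx|hrx] := lerP (- r) x; first nra.
have : t - x <= - r by rewrite -subr_ge0; nra.
nra.
Qed.

Lemma quad_root_normc_bound t d z : quad_root t d z ->
  Normc.normc z <= 1 + `|t| + `|d|.
Proof.
have ht := normr_ge0 t; have hd := normr_ge0 d.
case: z => x y hz; rewrite normc_le_sqr; last lra.
have [y0|yn0] := eqVneq y 0; last first.
  have [_ <-] := quad_root_nonreal hz yn0; have := ler_norm d; nra.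
move: hz; rewrite y0 => /quad_rootE[hx _]; rewrite expr0n addr0 /=.
have hx2 : x ^+ 2 = `|x| ^+ 2 by rewrite real_normK ?num_real.
have htx : t * x <= `|t| * `|x| by rewrite -normrM ler_norm.
have hdn : - d <= `|d| by rewrite -normrN ler_norm.
have := normr_ge0 x; nra.
Qed.

Lemma quad_root_real t d e : e ^+ 2 = t ^+ 2 - 4 * d ->
  quad_root t d (((t + e) / 2) +i* 0).
Proof.
move=> he; have -> : d = (t ^+ 2 - e ^+ 2) / 4 by rewrite he; field.
by apply/quad_rootE; split; field.
Qed.

Lemma quad_root_complex t d e : e ^+ 2 = 4 * d - t ^+ 2 ->
  quad_root t d ((t / 2) +i* (e / 2)).
Proof.
move=> he; have -> : d = (t ^+ 2 + e ^+ 2) / 4 by rewrite he; field.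
by apply/quad_rootE; split; field.
Qed.

Lemma quad_roots_normc_lt t d r : 0 < r ->
  (forall z, quad_root t d z -> Normc.normc z < r) ->
  d < r ^+ 2 /\ 0 < r ^+ 2 - t * r + d.
Proof.
move=> r0 H; have [hD|hD] := ltrP (t ^+ 2 - 4 * d) 0.
  have he : Num.sqrt (4 * d - t ^+ 2) ^+ 2 = 4 * d - t ^+ 2 by rewrite sqr_sqrtr //; lra.
  have := H _ (quad_root_complex he); rewrite normc_lt_sqr // => h.
  have hd : (t / 2) ^+ 2 + (Num.sqrt (4 * d - t ^+ 2) / 2) ^+ 2 = d.
    by rewrite !expr_div_n he; field.
  rewrite hd in h; split; nra.
set e := Num.sqrt (t ^+ 2 - 4 * d).
have he : e ^+ 2 = t ^+ 2 - 4 * d by rewrite sqr_sqrtr.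
have he' : (- e) ^+ 2 = t ^+ 2 - 4 * d by rewrite sqrrN.
have := H _ (quad_root_real he); have := H _ (quad_root_real he').
rewrite !normc_lt_sqr // expr0n /= !addr0.
set x1 := (t + e) / 2; set x2 := (t + - e) / 2 => h2 h1.
have ht : t = x1 + x2 by rewrite /x1 /x2; field.
have hd : d = x1 * x2.
  have -> : d = (t ^+ 2 - e ^+ 2) / 4 by rewrite he; field.
  by rewrite /x1 /x2; field.
have [x1r rx1] : x1 < r /\ - r < x1 by split; nra.
have [x2r rx2] : x2 < r /\ - r < x2 by split; nra.
rewrite ht hd; split; nra.
Qed.

End QuadraticRoots.

Section SpectralRadius.
Variable R : realType.
Implicit Types (a b g l r : R) (A : 'M[R]_2) (z : R[i]).

Lemma eigenvalue_map_complex A z :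
  eigenvalue (map_mx (fun x : R => x%:C) A) z <-> quad_root (\tr A) (\det A) z.
Proof.
by rewrite eigenvalue_mx22 trace_map_mx det_map_mx; split=> /eqP.
Qed.

Lemma specrad_ge A z : quad_root (\tr A) (\det A) z -> Normc.normc z <= specrad A.
Proof.
move=> hz; apply: ub_le_sup; last by exists z => //; apply/eigenvalue_map_complex.
exists (1 + `|\tr A| + `|\det A|) => _ [w /eigenvalue_map_complex hw <-].
exact: quad_root_normc_bound.
Qed.

Lemma specrad_le A r : 0 <= r ->
  (forall z, quad_root (\tr A) (\det A) z -> Normc.normc z <= r) -> specrad A <= r.
Proof.
move=> r0 H; rewrite /specrad; set S := (X in sup X).
have [[y Sy]|S0] := pselect (S !=set0).
  by apply: ge_sup; [exists y | move=> _ [z /eigenvalue_map_complex hz <-]; apply: H].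
by rewrite (_ : S = set0) ?sup0 //; apply/seteqP; split=> w // Sw; apply: S0; exists w.
Qed.

Lemma specrad_bound A : specrad A <= 1 + `|\tr A| + `|\det A|.
Proof.
apply: specrad_le => [|z]; last exact: quad_root_normc_bound.
by rewrite -addrA addr_ge0 ?addr_ge0.
Qed.

Lemma mxtrace_Tmat a b g l : \tr (Tmat a b g l) = (1 + b) * (1 - a * l) - g * (a * l).
Proof. by rewrite /mxtrace !big_ord_recl big_ord0 !mxE /= mulrA addr0 addr0. Qed.

Lemma det_Tmat a b g l : \det (Tmat a b g l) = b * (1 - a * l).
Proof. by rewrite det_mx22 !mxE /= mulr0 mulr1 sub0r mulNr opprK. Qed.

Lemma specrad_Tmat_ge a b g l : a * l = 1 -> `|g| <= specrad (Tmat a b g l).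
Proof.
move=> al1; have hz : quad_root (\tr (Tmat a b g l)) (\det (Tmat a b g l)) ((- g) +i* 0).
  by apply/quad_rootE; rewrite mxtrace_Tmat det_Tmat al1; split; ring.
by apply: le_trans (specrad_ge hz); rewrite /= expr0n addr0 sqrtr_sqr normrN.
Qed.

Lemma specrad_Tmat_bounded mu L a b g :
  has_ubound [set specrad (Tmat a b g l) | l in `[mu, L]].
Proof.
set K := `|a| * (`|mu| + `|L|).
exists (1 + (`|1 + b| + `|g| + `|b|) * (1 + K)) => _ [l /= hl <-].
apply: le_trans (specrad_bound _) _; rewrite mxtrace_Tmat det_Tmat.
have hu : `|a * l| <= K.
  rewrite normrM ler_wpM2l // ler_norml; move: hl; rewrite in_itv /= => /andP[hl1 hl2].
  have := ler_norm L; have := ler_norm (- mu); rewrite normrN.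
  by have := normr_ge0 mu; have := normr_ge0 L; move=> *; apply/andP; split; lra.
have h1u : `|1 - a * l| <= 1 + K by apply: le_trans (ler_normB _ _) _; rewrite normr1 lerD2l.
have ht : `|(1 + b) * (1 - a * l) - g * (a * l)| <= (`|1 + b| + `|g|) * (1 + K).
  apply: le_trans (ler_normB _ _) _; rewrite normrM [`|g * _|]normrM mulrDl.
  apply: lerD; first by rewrite ler_wpM2l.
  by rewrite ler_wpM2l // (le_trans hu) // lerDr.
have hd : `|b * (1 - a * l)| <= `|b| * (1 + K) by rewrite normrM ler_wpM2l.
lra.
Qed.

Lemma rho_worst_ge mu L a b g l : mu <= l <= L ->
  specrad (Tmat a b g l) <= rho_worst mu L a b g.
Proof.
move=> hl; apply: ub_le_sup; first exact: specrad_Tmat_bounded.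
by exists l => //=; rewrite in_itv.
Qed.

Lemma rho_worst_le mu L a b g r : mu <= L ->
  (forall l, mu <= l <= L -> specrad (Tmat a b g l) <= r) -> rho_worst mu L a b g <= r.
Proof.
move=> muL H; apply: ge_sup; first by exists (specrad (Tmat a b g mu)), mu; rewrite //= in_itv /= lexx.
by move=> _ [l /= hl <-]; apply: H; move: hl; rewrite in_itv.
Qed.

End SpectralRadius.

Section NesterovRate.
Variable R : realType.
Implicit Type q : R.

Lemma two_sqrt_ratio q : 0 <= q ->
  2 * Num.sqrt q / Num.sqrt (3 + q) = Num.sqrt (4 * q / (3 + q)).
Proof.
move=> q0; have sqrt4 : Num.sqrt 4 = 2 :> R.
  by rewrite (_ : 4 = 2 ^+ 2) ?sqrtr_sqr ?ger0_norm //; ring.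
by rewrite sqrtrM ?mulr_ge0 // sqrtrM // sqrt4 sqrtrV // addr_ge0.
Qed.

Lemma nesterov_rates_le q : 0 <= q -> q <= 1 ->
  1 - 2 * Num.sqrt q / Num.sqrt (3 + q) <= 1 - Num.sqrt q.
Proof.
move=> q0 q1; rewrite lerD2l lerN2 two_sqrt_ratio // ler_sqrt ?divr_ge0 ?mulr_ge0 ?addr_ge0 //.
have : 0 <= q * (1 - q) by rewrite mulr_ge0 // subr_ge0.
rewrite ler_pdivlMr; lra.
Qed.

End NesterovRate.

Section OGMRate.
Variables (R : realType) (q g : R).
Hypotheses (q_gt0 : 0 < q) (q_lt1 : q < 1) (g_gt0 : 0 < g) (g_lt1 : g < 1).
Hypothesis g_root : g ^+ 2 - (2 + q) * g + (1 - q) = 0.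
Local Notation b := (g ^+ 2 / (1 - q)).

Lemma ogm_quad_root_normc_le u z : q <= u <= 1 ->
  quad_root ((1 + b) * (1 - u) - g * u) (b * (1 - u)) z -> Normc.normc z <= g.
Proof.
move=> /andP[qu u1]; have q1 : 0 < 1 - q by rewrite subr_gt0.
have b0 : 0 <= b by rewrite divr_ge0 ?sqr_ge0 ?ltW.
have hp : (1 - q) * (g ^+ 2 - ((1 + b) * (1 - u) - g * u) * g + b * (1 - u))
          = 2 * g ^+ 2 * (u - q).
  apply/eqP; rewrite -subr_eq0 -(mulr0 ((u - 1) * g)) -g_root; apply/eqP.
  by field; rewrite subr_eq0 gt_eqF.
apply: quad_root_normc_le => //.
- by rewrite -[X in _ <= X](mulfVK (_ : 1 - q != 0)) ?gt_eqF // ler_wpM2l // lerB.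
- by rewrite -(pmulr_rge0 _ q1) hp; nra.
- have -> : g ^+ 2 + ((1 + b) * (1 - u) - g * u) * g + b * (1 - u) =
             (1 - u) * (g ^+ 2 + (1 + b) * g + b) by ring.
  apply: mulr_ge0; first lra.
  by rewrite -addrA addr_ge0 ?sqr_ge0 //; apply: addr_ge0 => //; apply: mulr_ge0; [lra | exact: ltW].
Qed.

Lemma charpoly_at_ogm_rate_le0 (b' g' : R) : g' <= g -> b' * (1 - q) <= g ^+ 2 ->
  g ^+ 2 - ((1 + b') * (1 - q) - g' * q) * g + b' * (1 - q) <= 0.
Proof.
move=> gg bg.
have -> : g ^+ 2 - ((1 + b') * (1 - q) - g' * q) * g + b' * (1 - q) =
    - ((g - g') * q * g) - (g ^+ 2 - b' * (1 - q)) * (1 - g).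
  by apply/eqP; rewrite -subr_eq0 -(mulr0 (- g)) -g_root; apply/eqP; ring.
have g'g : 0 <= g - g' by rewrite subr_ge0.
have b'g : 0 <= g ^+ 2 - b' * (1 - q) by rewrite subr_ge0.
have := mulr_ge0 (mulr_ge0 g'g (ltW q_gt0)) (ltW g_gt0).
have g1 : 0 <= 1 - g by rewrite subr_ge0 ltW.
have := mulr_ge0 b'g g1.
lra.
Qed.

Lemma sqrt_q_mul_1_add_rate : Num.sqrt (q * (1 + g)) = 1 - g.
Proof.
have -> : q * (1 + g) = (1 - g) ^+ 2.
  by apply/eqP; rewrite -subr_eq0 -(mulr0 (- 1)) -g_root; apply/eqP; ring.
by rewrite sqrtr_sqr ger0_norm // subr_ge0 ltW.
Qed.

Lemma ogm_rate_le_nesterov : g <= 1 - 2 * Num.sqrt q / Num.sqrt (3 + q).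
Proof.
have q0 := ltW q_gt0; have g0 := ltW g_gt0.
suff : Num.sqrt (4 * q / (3 + q)) <= 1 - g by rewrite two_sqrt_ratio //; lra.
rewrite -sqrt_q_mul_1_add_rate ler_sqrt ?mulr_ge0 ?addr_ge0 //.
rewrite ler_pdivrMr ?addr_gt0 //.
have -> : q * (1 + g) * (3 + q) = 4 * q + q * (g + g ^+ 2).
  by apply/eqP; rewrite -subr_eq0 -(mulr0 (- q)) -g_root; apply/eqP; ring.
by rewrite lerDl mulr_ge0 ?addr_ge0 ?sqr_ge0.
Qed.

End OGMRate.

Section GammaStar.
Variable R : realType.
Implicit Type q : R.

Definition gamma_star q := (2 + q - Num.sqrt (q ^+ 2 + 8 * q)) / 2.

Lemma gamma_star_root q : 0 <= q ->
  gamma_star q ^+ 2 - (2 + q) * gamma_star q + (1 - q) = 0.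
Proof.
move=> q0; have hs : Num.sqrt (q ^+ 2 + 8 * q) ^+ 2 = q ^+ 2 + 8 * q.
  by rewrite sqr_sqrtr // addr_ge0 ?sqr_ge0 ?mulr_ge0.
rewrite /gamma_star; set s := Num.sqrt _ in hs *.
transitivity ((s ^+ 2 - (q ^+ 2 + 8 * q)) / 4); first by field.
by rewrite hs subrr mul0r.
Qed.

Lemma gamma_star_bounds q : 0 < q -> q < 1 -> 0 < gamma_star q < 1.
Proof.
move=> q0 q1; have hs : Num.sqrt (q ^+ 2 + 8 * q) ^+ 2 = q ^+ 2 + 8 * q.
  by rewrite sqr_sqrtr // addr_ge0 ?sqr_ge0 ?mulr_ge0 ?ltW.
have s0 := sqrtr_ge0 (q ^+ 2 + 8 * q).
rewrite /gamma_star; set s := Num.sqrt _ in hs s0 *.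
have : q < s by rewrite ltNge; apply/negP => sq; nra.
have : s < 2 + q by rewrite ltNge; apply/negP => sq; nra.
move=> *; apply/andP; split; lra.
Qed.

End GammaStar.

Section WorstCaseRate.
Variables (R : realType) (mu L : R).
Hypotheses (mu_gt0 : 0 < mu) (mu_lt_L : mu < L).
Local Notation q := (mu / L).
Local Notation gs := (gamma_star q).
Local Notation bs := (gs ^+ 2 / (1 - q)).
Local Notation rho := (rho_worst mu L (1 / L)).

Let L_gt0 : 0 < L. Proof. exact: lt_trans mu_lt_L. Qed.
Let q_gt0 : 0 < q. Proof. by rewrite divr_gt0. Qed.
Let q_lt1 : q < 1. Proof. by rewrite ltr_pdivrMr // mul1r. Qed.
Let gs_gt0 : 0 < gs. Proof. by have /andP[] := gamma_star_bounds q_gt0 q_lt1. Qed.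
Let gs_lt1 : gs < 1. Proof. by have /andP[] := gamma_star_bounds q_gt0 q_lt1. Qed.
Let gs_root : gs ^+ 2 - (2 + q) * gs + (1 - q) = 0.
Proof. exact/gamma_star_root/ltW. Qed.

Lemma rho_worst_ge_abs b g : `|g| <= rho b g.
Proof.
have L_in : mu <= L <= L by rewrite (ltW mu_lt_L) lexx.
apply: le_trans (rho_worst_ge _ _ _ L_in); apply: specrad_Tmat_ge.
by rewrite mul1r mulVf ?gt_eqF.
Qed.

Lemma rho_worst_ogm : rho bs gs = gs.
Proof.
apply/eqP; rewrite eq_le (le_trans _ (rho_worst_ge_abs _ _)) ?gtr0_norm // andbT.
apply: rho_worst_le (ltW mu_lt_L) _ => l /andP[mu_l l_L].
apply: specrad_le (ltW gs_gt0) _ => z; rewrite mxtrace_Tmat det_Tmat.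
apply: ogm_quad_root_normc_le => //; rewrite mul1r mulrC.
by rewrite ler_pM2l ?invr_gt0 // mu_l /= mulrC ler_pdivrMr // mul1r.
Qed.

Lemma rho_worst_ogm_le b g : gs <= rho b g.
Proof.
rewrite leNgt; apply/negP => rho_lt.
have g_lt : g < gs.
  exact: le_lt_trans (ler_norm g) (le_lt_trans (rho_worst_ge_abs b g) rho_lt).
have mu_in : mu <= mu <= L by rewrite lexx ltW.
have roots_lt z : quad_root (\tr (Tmat (1 / L) b g mu)) (\det (Tmat (1 / L) b g mu)) z ->
    Normc.normc z < gs.
  by move/specrad_ge/le_lt_trans; apply; apply: le_lt_trans (rho_worst_ge _ _ _ mu_in) _.
have [] := quad_roots_normc_lt gs_gt0 roots_lt.
rewrite mxtrace_Tmat det_Tmat (_ : 1 / L * mu = q) => [hd hp|]; last by rewrite mul1r mulrC.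
have := charpoly_at_ogm_rate_le0 q_gt0 gs_gt0 gs_lt1 gs_root (ltW g_lt) (ltW hd).
lra.
Qed.

End WorstCaseRate.

Theorem mainTheorem1 (R : realType) (mu L : R) (hmu : 0 < mu) (hmuL : mu < L) :
  let q := mu / L in
  let gs := (2 + q - Num.sqrt (q ^+ 2 + 8 * q)) / 2 in
  let bs := gs ^+ 2 / (1 - q) in
  bs = (2 + q - Num.sqrt (q ^+ 2 + 8 * q)) ^+ 2 / (4 * (1 - q)) /\
  (forall b g : R, rho_worst mu L (1 / L) bs gs <= rho_worst mu L (1 / L) b g) /\
  rho_worst mu L (1 / L) bs gs = 1 - Num.sqrt (q * (1 + gs)) /\
  1 - Num.sqrt (q * (1 + gs)) = gs /\
  gs <= 1 - 2 * Num.sqrt q / Num.sqrt (3 + q) /\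
  1 - 2 * Num.sqrt q / Num.sqrt (3 + q) <= 1 - Num.sqrt q.
Proof.
move=> q gs bs.
have q_gt0 : 0 < q by rewrite divr_gt0 // (lt_trans hmu).
have q_lt1 : q < 1 by rewrite ltr_pdivrMr ?mul1r // (lt_trans hmu).
have /andP[gs_gt0 gs_lt1] := gamma_star_bounds q_gt0 q_lt1.
have gs_root := gamma_star_root (ltW q_gt0).
have sqrt_rate := sqrt_q_mul_1_add_rate gs_lt1 gs_root.
have rho_gs : rho_worst mu L (1 / L) bs gs = gs := rho_worst_ogm hmu hmuL.
split; first by rewrite /bs /gs; field; rewrite subr_eq0 gt_eqF.
split; first by move=> b g; rewrite rho_gs; exact: rho_worst_ogm_le.
split; first by rewrite rho_gs sqrt_rate opprB addrC subrK.
split; first by rewrite sqrt_rate opprB addrC subrK.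
split; first exact: ogm_rate_le_nesterov q_gt0 gs_gt0 gs_lt1 gs_root.
exact: nesterov_rates_le (ltW q_gt0) (ltW q_lt1).
Qed.
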